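(* Let $\mathcal L(x,E)=\partial_x+\frac{\ell}{x}+e+p(x,E)e_0$ with $p(x,E)=x^{Mh^\vee}-E$, and let $h\in\mathfrak h$ satisfy $[h,e]=e$ and $[h,e_0]=-(h^\vee-1)e_0$. Then the gauge transformed connection $q(x,E)^{\operatorname{ad}h}\mathcal L(x,E):=q(x,E)^{h}\circ\mathcal L(x,E)\circ q(x,E)^{-h}$ satisfies $$q(x,E)^{\operatorname{ad}h}\mathcal L(x,E)=\partial_x+q(x,E)\Lambda+\frac{\ell-Mh}{x}+O(x^{-1-\delta}),\qquad x\to+\infty,$$ where $\Lambda=e_0+e$.
   Context: $\mathfrak g$ is a simple complex Lie algebra of type $A$, $D$ or $E$ with Chevalley generators $\{f_i,h_i,e_i\}_{i=1}^n$, Cartan subalgebra $\mathfrak h=\bigoplus\mathbb Ch_i$, dual Coxeter number $h^\vee$, normalized invariant form $(a|b)=\kappa(a,b)/h^\vee$ ($\kappa$ the Killing form). The affine Kac–Moody algebra is $\widehat{\mathfrak g}=\mathfrak g\otimes\mathbb C[t,t^{-1}]\oplus\mathbb Cc$ with $[a\otimes f,b\otimes g]=[a,b]\otimes fg+(a|b)\operatorname{res}_{t=0}(f'g\,dt)c$ and $c$ central; $e_0=a_0\otimes t$ with $a_0$ a nonzero element of the root space $\mathfrak g_{-\theta}$, $-\theta$ the lowest root; $e=\sum_{i=1}^ne_i$. Fix $\ell\in\mathfrak h$, $M>0$, $E\in\mathbb C$. Let $s=\lfloor\frac{M+1}{h^\vee M}\rfloor$, $\delta=M(h^\vee(1+s)-1)-1>0$,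 and $q(x,E)=x^M+\sum_{j=1}^s c_j(E)x^{M(1-h^\vee j)}$, where $c_j(E)=\binom{1/h^\vee}{j}(-E)^j$, so that $p(x,E)^{1/h^\vee}=q(x,E)+O(x^{-1-\delta})$ as $x\to+\infty$ (branches real positive for large positive $x$). *)

From HB Require Import structures.
From mathcomp Require Import all_boot all_order all_algebra.
From mathcomp Require Import all_classical all_reals all_analysis.
From mathcomp.real_closed Require Import complex.
From Stdlib Require Import ClassicalEpsilon.

Set Implicit Arguments.
Unset Strict Implicit.
Unset Printing Implicit Defensive.

Import Order.TTheory GRing.Theory Num.Theory.
Local Open Scope ring_scope.

Inductive ade_type := TA of nat | TD of nat | TE6 | TE7 | TE8.

Definition ade_valid (t : ade_type) : bool :=
  match t with TA n => (1 <= n)%N | TD n => (4 <= n)%N | _ => true end.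

Definition ade_rank (t : ade_type) : nat :=
  match t with TA n => n | TD n => n | TE6 => 6 | TE7 => 7 | TE8 => 8 end.

Definition dual_coxeter (t : ade_type) : nat :=
  match t with
  | TA n => n.+1 | TD n => (2 * n - 2)%N | TE6 => 12 | TE7 => 18 | TE8 => 30
  end.

Definition chain_adj (i j : nat) : bool := (i.+1 == j) || (j.+1 == i).

(* adjacency of the standard Dynkin diagrams, vertices 0 .. rank-1:
   A_n : the path 0 - 1 - ... - (n-1);
   D_n : the path 0 - ... - (n-2), plus vertex n-1 joined to n-3;
   E_n : the path 0 - ... - (n-2), plus vertex n-1 joined to 2.        *)
Definition ade_adj (t : ade_type) (i j : nat) : bool :=
  match t with
  | TA _ => chain_adj i j
  | TD n => [|| (i < n.-1)%N && (j < n.-1)%N && chain_adj i j,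
                (i == n.-1) && (j == n - 3)%N | (j == n.-1) && (i == n - 3)%N]
  | TE6 | TE7 | TE8 =>
      let n := ade_rank t in
      [|| (i < n.-1)%N && (j < n.-1)%N && chain_adj i j,
          (i == n.-1) && (j == 2%N) | (j == n.-1) && (i == 2%N)]
  end.

Definition ade_cartan (t : ade_type) (i j : nat) : int :=
  if i == j then 2 else if ade_adj t i j then -1 else 0.

Notation CC R := (complex R).

(* A simple complex Lie algebra of type t with Chevalley generators    *)
(* {f_i, h_i, e_i}; the Cartan matrix is the standard one of type t up *)
(* to a relabelling sig of the nodes.                                  *)

Definition is_simple_ADE_chevalley (R : realType) (t : ade_type)
    (g : vectType (CC R)) (br : g -> g -> g)
    (sig : 'I_(ade_rank t) -> 'I_(ade_rank t))
    (eg fg hg : 'I_(ade_rank t) -> g) : Prop :=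
  let A i j := ade_cartan t (sig i) (sig j) in
  [/\ ade_valid t /\ injective sig,
      [/\ forall (a : CC R) x y z, br (a *: x + y) z = a *: br x z + br y z,
          forall (a : CC R) x y z, br z (a *: x + y) = a *: br z x + br z y,
          forall x, br x x = 0 &
          forall x y z, br x (br y z) + br y (br z x) + br z (br x y) = 0],
      (exists x y, br x y != 0) /\
      (forall I : {vspace g}, (forall x y, y \in I -> br x y \in I) ->
         I = 0%VS \/ I = fullv),
      [/\ forall i j, br (hg i) (hg j) = 0,
          forall i j, br (hg i) (eg j) = (A i j)%:~R *: eg j,
          forall i j, br (hg i) (fg j) = - ((A i j)%:~R *: fg j),
          forall i j, br (eg i) (fg j) = if i == j then hg i else 0 &
          forall i j, i != j ->
             iter `|1 - A i j|%N (br (eg i)) (eg j) = 0 /\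
             iter `|1 - A i j|%N (br (fg i)) (fg j) = 0] &
      forall U : {vspace g}, (forall i, eg i \in U /\ fg i \in U) ->
         (forall x y, x \in U -> y \in U -> br x y \in U) -> U = fullv].

Definition cartan_sub (R : realType) (t : ade_type) (g : vectType (CC R))
    (hg : 'I_(ade_rank t) -> g) : {vspace g} :=
  <<[seq hg i | i <- enum 'I_(ade_rank t)]>>%VS.

(* a0 is a nonzero element of the root space g_{-theta}, theta the highest
   root: theta = sum_i kth_i alpha_i (alpha_i(h_j) = a_{ji}) is the weight
   of maximal height among all (integral) weights of nonzero vectors.    *)
Definition is_lowest_root_vector (R : realType) (t : ade_type)
    (g : vectType (CC R)) (br : g -> g -> g)
    (sig : 'I_(ade_rank t) -> 'I_(ade_rank t))
    (hg : 'I_(ade_rank t) -> g) (a0 : g) : Prop :=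
  let A i j := ade_cartan t (sig i) (sig j) in
  a0 != 0 /\
  exists kth : 'I_(ade_rank t) -> int,
    (forall j, br (hg j) a0 = - ((\sum_i kth i * A j i)%:~R *: a0)) /\
    (forall (x : g) (k : 'I_(ade_rank t) -> int), x != 0 ->
       (forall j, br (hg j) x = (\sum_i k i * A j i)%:~R *: x) ->
       \sum_i k i <= \sum_i kth i).

Definition killing (R : realType) (g : vectType (CC R)) (br : g -> g -> g)
    (a b : g) : CC R :=
  \sum_(i < \dim (fullv : {vspace g}))
     coord (vbasis fullv) i (br a (br b (tnth (vbasis fullv) i))).

Definition nform (R : realType) (t : ade_type) (g : vectType (CC R))
    (br : g -> g -> g) (a b : g) : CC R :=
  killing br a b / (dual_coxeter t)%:R.

(* The affine algebra  g^ = g (x) C[t,t^-1] (+) C c.  An element is    *)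
(* represented by (F, z) with F : int -> g the (finitely supported)    *)
(* family of coefficients of t^k, and z the coefficient of c.          *)

Definition ghat (R : realType) (g : vectType (CC R)) : lmodType (CC R) :=
  ((int -> g) * CC R)%type.

Definition supp_bound (R : realType) (g : vectType (CC R)) (F : int -> g) : nat :=
  epsilon (inhabits 0%N) (fun N : nat => forall k : int, (N < `|k|)%N -> F k = 0).

Definition tens (R : realType) (g : vectType (CC R)) (a : g) (m : int) : ghat g :=
  (fun k : int => if k == m then a else 0, 0).

(* [a (x) f, b (x) g] = [a,b] (x) fg + (a|b) res_{t=0}(f' g dt) c, c central;
   on t^i, t^j the cocycle is i (a|b) [i + j = 0].                       *)
Definition hbr (R : realType) (t : ade_type) (g : vectType (CC R))
    (br : g -> g -> g) (X Y : ghat g) : ghat g :=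
  let N := supp_bound X.1 in
  (fun k : int => \sum_(j < (N + N).+1)
      br (X.1 (j%:Z - N%:Z)) (Y.1 (k - (j%:Z - N%:Z))),
   \sum_(j < (N + N).+1)
      (j%:Z - N%:Z)%:~R * nform t br (X.1 (j%:Z - N%:Z)) (Y.1 (- (j%:Z - N%:Z)))).

(* z^{ad X} v : write v as a finite sum of ad X-eigenvectors v_k with
   integer eigenvalues k and send it to sum z^k v_k.                    *)
Definition qad (R : realType) (t : ade_type) (g : vectType (CC R))
    (br : g -> g -> g) (X : ghat g) (z : CC R) (v : ghat g) : ghat g :=
  let s := epsilon (inhabits [::])
     (fun s : seq (int * ghat g) =>
        (forall p, List.In p s -> hbr t br X p.2 = p.1%:~R *: p.2) /\
        v = \sum_(p <- s) p.2) in
  \sum_(p <- s) (z ^ p.1) *: p.2.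

Definition dC (R : realType) (f : R -> CC R) (x : R) : CC R :=
  Complex (derive1 (fun y => complex.Re (f y)) x)
          (derive1 (fun y => complex.Im (f y)) x).

(* Gauge transformation of the connection d/dx + A(x) by q(x)^h:
   q^h o (d/dx + A) o q^{-h} = d/dx + q^{ad h} A - (q'/q) h.
   A connection d/dx + A is represented by its coefficient A. *)
Definition gauge (R : realType) (t : ade_type) (g : vectType (CC R))
    (br : g -> g -> g) (hh : ghat g) (q : R -> CC R) (A : R -> ghat g)
    : R -> ghat g :=
  fun x => qad t br hh (q x) (A x) - (dC q x / q x) *: hh.

Definition gbinom (K : fieldType) (a : K) (j : nat) : K :=
  (\prod_(i < j) (a - i%:R)) / (j`!)%:R.

Definition s_const (R : realType) (hv : nat) (M : R) : nat :=
  Num.truncn ((M + 1) / (hv%:R * M)).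

Definition delta_const (R : realType) (hv : nat) (M : R) : R :=
  M * (hv%:R * (1 + (s_const hv M)%:R) - 1) - 1.

Definition c_coef (R : realType) (hv : nat) (E : CC R) (j : nat) : CC R :=
  gbinom (hv%:R^-1) j * (- E) ^+ j.

Definition p_fun (R : realType) (hv : nat) (M : R) (E : CC R) (x : R) : CC R :=
  Complex (x `^ (M * hv%:R)) 0 - E.

Definition q_fun (R : realType) (hv : nat) (M : R) (E : CC R) (x : R) : CC R :=
  Complex (x `^ M) 0 +
  \sum_(1 <= j < (s_const hv M).+1)
     c_coef hv E j * Complex (x `^ (M * (1 - hv%:R * j%:R))) 0.

(* F(x) = O(w(x)) as x -> +oo for a g^-valued F: eventually F is a fixed
   finite linear combination of elements of g^ whose scalar coefficients
   are bounded by C w(x).                                              *)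
Definition bigO_pinfty (R : realType) (V : lmodType (CC R))
    (F : R -> V) (w : R -> R) : Prop :=
  exists (m : nat) (v : 'I_m -> V) (phi : 'I_m -> R -> CC R) (C x0 : R),
    forall x, x0 < x ->
      F x = \sum_(i < m) phi i x *: v i /\
      forall i, `|phi i x| <= Complex (C * w x) 0.

From HB Require Import structures.
From mathcomp Require Import all_boot all_order all_algebra.
From mathcomp Require Import all_classical all_reals all_analysis.
From mathcomp.real_closed Require Import complex.
From mathcomp Require Import ring lra zify.
From Stdlib Require Import ClassicalEpsilon.

(* Write u = -E x^(-M h) (qvar below).  Then p = x^(M h) (1 + u) and
   q = x^M T(u), where T (qpoly) is the degree s truncation of the binomial
   series of (1 + u)^(1/h).  Since l, e, e_0 are eigenvectors of ad h with
   eigenvalues 0, 1, 1 - h, the gauge transform differs from the claimed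
   normal form by (q^(1-h) p - q) e_0 + (M/x - q'/q) h.  The first coefficient
   is x^M (1 + u - T(u)^h) / T(u)^(h-1), and by the Chu-Vandermonde identity
   1 + u - T(u)^h vanishes to order s + 1 at u = 0, whence the bound
   O(x^(M - M h (s+1))) = O(x^(-1-delta)).  The second is
   M h u T'(u) / (x T(u)) = O(x^(-1-M h)), and delta <= M h. *)

Set Implicit Arguments.
Unset Strict Implicit.
Unset Printing Implicit Defensive.

Import Order.TTheory GRing.Theory Num.Theory.
Local Open Scope ring_scope.

Section GeneralizedBinomial.
Variable K : numFieldType.

Lemma gbinom0 (a : K) : gbinom a 0 = 1.
Proof. by rewrite /gbinom big_ord0 fact0 divr1. Qed.

Lemma gbinomSr (a : K) j : gbinom a j.+1 * j.+1%:R = gbinom a j * (a - j%:R).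
Proof.
rewrite /gbinom big_ord_recr /= factS natrM.
by field; rewrite pnatr_eq0 -lt0n fact_gt0 addrC natr1 pnatr_eq0.
Qed.

Lemma gbinom_nat_gt (n j : nat) : (n < j)%N -> gbinom (n%:R : K) j = 0.
Proof. by move=> ltnj; rewrite /gbinom (bigD1 (Ordinal ltnj)) //= subrr !mul0r. Qed.

Lemma gbinom1 j : gbinom (1 : K) j = ((j == 0)%N + (j == 1)%N)%:R.
Proof.
case: j => [|[|j]]; first by rewrite gbinom0.
  by apply: (mulIf (oner_neq0 K)); rewrite gbinomSr gbinom0 subr0 mul1r.
by rewrite -(mulr1n (1 : K)) gbinom_nat_gt.
Qed.

Lemma gbinom_convSr (a b : K) n :
  (\sum_(j < n.+2) gbinom a j * gbinom b (n.+1 - j)) * n.+1%:R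
  = (\sum_(j < n.+1) gbinom a j * gbinom b (n - j)) * (a + b - n%:R).
Proof.
rewrite mulr_suml (eq_bigr (fun j : 'I_n.+2 =>
    gbinom a j * gbinom b (n.+1 - j) * j%:R
  + gbinom a j * gbinom b (n.+1 - j) * (n.+1 - j)%:R)); last first.
  by move=> j _; rewrite -mulrDr -natrD subnKC // -ltnS.
rewrite big_split /= [X in X + _]big_ord_recl [X in _ + X]big_ord_recr /=.
rewrite subnn !mulr0 add0r addr0 mulr_suml -big_split /=.
apply: eq_bigr => j _; rewrite /bump /= add1n subSS.
have -> : (n.+1 - j = (n - j).+1)%N by rewrite subSn // -ltnS.
rewrite mulrAC gbinomSr -(mulrA (gbinom a j)) gbinomSr natrB; last by rewrite -ltnS.
ring.
Qed.

Lemma gbinom_vandermonde (a b : K) n :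
  \sum_(j < n.+1) gbinom a j * gbinom b (n - j) = gbinom (a + b) n.
Proof.
elim: n => [|n IHn]; first by rewrite big_ord1 !gbinom0 mulr1.
have n1_neq0 : (n.+1%:R : K) != 0 by rewrite pnatr_eq0.
by apply: (mulIf n1_neq0); rewrite gbinom_convSr IHn gbinomSr.
Qed.

Definition binom_series (a : K) (s : nat) : {poly K} := \poly_(j < s.+1) gbinom a j.

Lemma coef_binom_seriesX (a : K) s k i : (i <= s)%N ->
  (binom_series a s ^+ k)`_i = gbinom (k%:R * a) i.
Proof.
elim: k i => [|k IHk] i le_is.
  rewrite expr0 coefC mul0r; case: i le_is => [|i] _; first by rewrite gbinom0.
  by rewrite -(mulr0n (1 : K)) gbinom_nat_gt.
rewrite exprSr coefM -[k.+1]addn1 natrD mulrDl mul1r -gbinom_vandermonde.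
apply: eq_bigr => j _; rewrite IHk; last by rewrite (leq_trans _ le_is) // -ltnS.
by rewrite coef_poly ltnS (leq_trans _ le_is) // leq_subr.
Qed.

(* binom_series (1/n) s is the degree s Taylor polynomial of (1 + X)^(1/n). *)
Lemma binom_series_root_coef (n s i : nat) : (0 < n)%N -> (i <= s)%N ->
  ('X + 1 - binom_series n%:R^-1 s ^+ n)`_i = 0.
Proof.
move=> n_gt0 le_is; rewrite coefB coef_binom_seriesX // mulfV ?pnatr_eq0 -?lt0n //.
rewrite gbinom1 coefD coefX coefC; apply/eqP; rewrite subr_eq0 natrD.
by case: i {le_is} => [|[|i]] /=; rewrite ?addr0 ?add0r.
Qed.

End GeneralizedBinomial.

Section HornerBounds.
Variable K : numFieldType.

Definition coef_norm1 (P : {poly K}) : K := \sum_(i < size P) `|P`_i|.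

Lemma coef_norm1_ge0 P : 0 <= coef_norm1 P.
Proof. by apply: sumr_ge0 => i _. Qed.

Lemma norm_horner_le (P : {poly K}) (k : nat) (u : K) :
  (forall i, (i < k)%N -> P`_i = 0) -> `|u| <= 1 ->
  `|P.[u]| <= coef_norm1 P * `|u| ^+ k.
Proof.
move=> P_low u_le1; rewrite horner_coef mulr_suml.
apply: le_trans (ler_norm_sum _ _ _) _; apply: ler_sum => i _.
rewrite normrM normrX; case: (ltnP i k) => [/P_low->|le_ki].
  by rewrite normr0 !mul0r.
by apply: ler_wpM2l => //; apply: ler_wiXn2l.
Qed.

Lemma norm_horner_ge_half (P : {poly K}) (u : K) :
  P`_0 = 1 -> `|u| <= 1 -> 2 * coef_norm1 (P - 1) * `|u| <= 1 ->
  2^-1 <= `|P.[u]|.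
Proof.
move=> P0 u_le1 small.
have le_P1 : `|P.[u] - 1| <= coef_norm1 (P - 1) * `|u|.
  have := @norm_horner_le (P - 1) 1 u; rewrite hornerD hornerN hornerC expr1.
  by apply=> // -[] // _; rewrite coefB coefC P0 subrr.
have half : 1 - 2^-1 = 2^-1 :> K by rewrite {1}(splitr 1) mul1r addrK.
rewrite -half lerBlDl -lerBlDr.
have := lerB_dist (1 : K) P.[u]; rewrite normr1 distrC => dist_le.
apply: le_trans dist_le (le_trans le_P1 _).
by rewrite -[2^-1]mulr1 ler_pdivlMl ?ltr0n // mulrA.
Qed.

End HornerBounds.

Lemma big_fst_partition (I T : eqType) (V : nmodType)
    (s : seq (I * T)) (L : seq I) (F : I * T -> V) :
  uniq L -> {subset map fst s <= L} ->
  \sum_(p <- s) F p = \sum_(l <- L) \sum_(p <- s | p.1 == l) F p.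
Proof.
move=> uL sub_sL; rewrite (exchange_big_dep predT) //=.
rewrite big_seq [RHS]big_seq; apply: eq_bigr => p p_s.
rewrite (eq_bigl (pred1 p.1)) => [|l]; last by rewrite /= eq_sym.
rewrite -big_filter filter_pred1_uniq ?sub_sL ?map_f //.
by rewrite big_cons big_nil addr0.
Qed.

Section EigenDecomposition.
Variables (K : numFieldType) (V : lmodType K) (D : V -> V).
Hypothesis linD : linear D.

Let Dl : {linear V -> V} := HB.pack D (GRing.isLinear.Build K V V *:%R D linD).
Let D0 : D 0 = 0. Proof. exact: (raddf0 Dl). Qed.
Let DD : {morph D : u v / u + v}. Proof. exact: (raddfD Dl). Qed.
Let DB : {morph D : u v / u - v}. Proof. exact: (raddfB Dl). Qed.
Let DZ (a : K) (v : V) : D (a *: v) = a *: D v. Proof. exact: (linearZZ Dl). Qed.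
Let D_sum (I : Type) (r : seq I) (P : pred I) (F : I -> V) :
  D (\sum_(i <- r | P i) F i) = \sum_(i <- r | P i) D (F i).
Proof. exact: (raddf_sum Dl). Qed.

Lemma eigenZ (l : int) (c : K) (v : V) :
  D v = l%:~R *: v -> D (c *: v) = l%:~R *: (c *: v).
Proof. by move=> eig_v; rewrite DZ eig_v !scalerA mulrC. Qed.

Lemma eigen_sum_eq0 (L : seq int) (w : int -> V) : uniq L ->
  (forall l, l \in L -> D (w l) = l%:~R *: w l) ->
  \sum_(l <- L) w l = 0 -> forall l, l \in L -> w l = 0.
Proof.
elim: L w => [|m L IHL] w //= /andP [m_notin_L uL] eig_w.
rewrite big_cons => sum_w0.
have eig_w' l : l \in L -> D ((l - m)%:~R *: w l) = l%:~R *: ((l - m)%:~R *: w l).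
  by move=> l_L; rewrite DZ eig_w ?inE ?l_L ?orbT // !scalerA mulrC.
(* Apply D - m: the m-component dies and the others get rescaled by l - m. *)
have sum_w'0 : \sum_(l <- L) (l - m)%:~R *: w l = 0.
  have := congr1 (fun v => D v - m%:~R *: v) sum_w0.
  rewrite /= D0 scaler0 subr0 DD D_sum eig_w ?inE ?eqxx //.
  rewrite scalerDr opprD addrACA subrr add0r scaler_sumr -sumrB => sum_eq0.
  rewrite -[RHS]sum_eq0 big_seq [RHS]big_seq; apply: eq_bigr => l l_L.
  by rewrite eig_w ?inE ?l_L ?orbT // intrB scalerBl.
have w_L l : l \in L -> w l = 0.
  move=> l_L; have /eqP := IHL _ uL eig_w' sum_w'0 l l_L.
  rewrite scaler_eq0 intr_eq0 subr_eq0 => /orP [/eqP l_m|/eqP //].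
  by move: m_notin_L; rewrite -l_m l_L.
move=> l; rewrite inE => /orP [/eqP ->|]; last exact: w_L.
by move: sum_w0; rewrite big_seq big1 ?addr0 // => l' /w_L.
Qed.

Lemma eigen_sum_scale_eq (s1 s2 : seq (int * V)) (z : K) :
  (forall p, p \in s1 -> D p.2 = p.1%:~R *: p.2) ->
  (forall p, p \in s2 -> D p.2 = p.1%:~R *: p.2) ->
  \sum_(p <- s1) p.2 = \sum_(p <- s2) p.2 ->
  \sum_(p <- s1) z ^ p.1 *: p.2 = \sum_(p <- s2) z ^ p.1 *: p.2.
Proof.
move=> eig1 eig2 sum12.
set L := undup (map fst (s1 ++ s2)).
have uL : uniq L := undup_uniq _.
have sub1 : {subset map fst s1 <= L}.
  by move=> l l_s; rewrite mem_undup map_cat mem_cat l_s.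
have sub2 : {subset map fst s2 <= L}.
  by move=> l l_s; rewrite mem_undup map_cat mem_cat l_s orbT.
pose S (s : seq (int * V)) (l : int) := \sum_(p <- s | p.1 == l) p.2.
have eigS s l : (forall p, p \in s -> D p.2 = p.1%:~R *: p.2) ->
    D (S s l) = l%:~R *: S s l.
  move=> eig; rewrite D_sum scaler_sumr big_seq_cond [RHS]big_seq_cond.
  by apply: eq_bigr => p /andP [/eig -> /eqP ->].
have S12 l : l \in L -> S s1 l - S s2 l = 0.
  apply: (@eigen_sum_eq0 L (fun l => S s1 l - S s2 l)) => //.
    by move=> l' _; rewrite DB !eigS // scalerBr.
  by rewrite sumrB -!big_fst_partition // sum12 subrr.
rewrite (big_fst_partition _ uL sub1) (big_fst_partition _ uL sub2).
rewrite big_seq [RHS]big_seq; apply: eq_bigr => l l_L.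
rewrite [LHS](eq_bigr (fun p => z ^ l *: p.2)) => [|p /eqP -> //].
rewrite [RHS](eq_bigr (fun p => z ^ l *: p.2)) => [|p /eqP -> //].
by rewrite -!scaler_sumr; congr (_ *: _); apply/eqP; rewrite -subr_eq0 S12.
Qed.

End EigenDecomposition.

Lemma In_memP (T : eqType) (x : T) (s : seq T) : reflect (List.In x s) (x \in s).
Proof.
elim: s => [|y s IHs] /=; first by constructor.
rewrite inE; apply: (iffP orP) => [[/eqP ->|/IHs]|[->|/IHs]];
  by [left | right | rewrite eqxx].
Qed.

Section AffineBracket.
Variables (R : realType) (t : ade_type) (g : vectType (CC R)) (br : g -> g -> g).
Hypothesis br_linl : forall (a : CC R) x y z, br (a *: x + y) z = a *: br x z + br y z.
Hypothesis br_linr : forall (a : CC R) x y z, br z (a *: x + y) = a *: br z x + br z y.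

Let brl (z : g) : {linear g -> g} :=
  HB.pack (br^~ z)
    (GRing.isLinear.Build _ _ _ *:%R (br^~ z) (fun a x y => br_linl a x y z)).
Let brr (z : g) : {linear g -> g} :=
  HB.pack (br z)
    (GRing.isLinear.Build _ _ _ *:%R (br z) (fun a x y => br_linr a x y z)).

Let br0l z : br 0 z = 0. Proof. exact: (raddf0 (brl z)). Qed.
Let br0r z : br z 0 = 0. Proof. exact: (raddf0 (brr z)). Qed.
Let brZl (a : CC R) x z : br (a *: x) z = a *: br x z.
Proof. exact: (linearZZ (brl z)). Qed.
Let brZr (a : CC R) x z : br z (a *: x) = a *: br z x.
Proof. exact: (linearZZ (brr z)). Qed.
Let br_suml (I : Type) (r : seq I) (F : I -> g) z :
  br (\sum_(i <- r) F i) z = \sum_(i <- r) br (F i) z.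
Proof. exact: (raddf_sum (brl z)). Qed.
Let br_sumr (I : Type) (r : seq I) (F : I -> g) z :
  br z (\sum_(i <- r) F i) = \sum_(i <- r) br z (F i).
Proof. exact: (raddf_sum (brr z)). Qed.

Lemma bracket_span_eq0 (X : seq g) :
  (forall u v, u \in X -> v \in X -> br u v = 0) ->
  forall a b, a \in <<X>>%VS -> b \in <<X>>%VS -> br a b = 0.
Proof.
move=> X_comm a b aX bX.
rewrite (coord_span (X := in_tuple X) aX) (coord_span (X := in_tuple X) bX).
rewrite br_suml big1 // => i _; rewrite brZl br_sumr big1 ?scaler0 // => j _.
by rewrite brZr X_comm ?scaler0 // mem_nth.
Qed.

Lemma hbr_tens0l (h : g) (Y : ghat g) :
  hbr t br (tens h 0) Y = (fun k => br h (Y.1 k), 0).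
Proof.
rewrite /hbr; set N := supp_bound _.
have ltN : (N < (N + N).+1)%N by rewrite ltnS leq_addr.
have shift_neq0 (j : 'I_(N + N).+1) : j != Ordinal ltN -> (j%:Z - N%:Z == 0) = false.
  by move=> jN; rewrite subr_eq0 eqz_nat; apply: negbTE.
congr (_, _).
  apply: funext => k; rewrite (bigD1 (Ordinal ltN)) //= subrr eqxx subr0.
  by rewrite big1 ?addr0 // => j jN; rewrite shift_neq0 // br0l.
apply: big1 => j _; case: (eqVneq j (Ordinal ltN)) => [->|jN].
  by rewrite /= subrr mul0r.
rewrite /= shift_neq0 // /nform /killing big1 ?mul0r ?mulr0 // => i _.
by rewrite br0l linear0.
Qed.

Lemma linear_hbr_tens0 (h : g) : linear (hbr t br (tens h 0)).
Proof.
move=> a X Y; rewrite !hbr_tens0l.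
apply: injective_projections => /=; last by rewrite scaler0 addr0.
by apply: funext => k; exact: br_linr.
Qed.

Lemma hbr_tens0_tens (h a : g) (m : int) :
  hbr t br (tens h 0) (tens a m) = tens (br h a) m.
Proof.
by rewrite hbr_tens0l; congr (_, _); apply: funext => k /=; case: ifP; rewrite ?br0r.
Qed.

End AffineBracket.

Lemma tens0 (R : realType) (g : vectType (CC R)) (m : int) : tens (0 : g) m = 0.
Proof. by rewrite /tens; congr (_, _); apply: funext => k; case: ifP. Qed.

Lemma qad_eigen_sum (R : realType) (t : ade_type) (g : vectType (CC R))
    (br : g -> g -> g) (X : ghat g) (z : CC R) (s : seq (int * ghat g)) :
  linear (hbr t br X) -> (forall p, p \in s -> hbr t br X p.2 = p.1%:~R *: p.2) ->
  qad t br X z (\sum_(p <- s) p.2) = \sum_(p <- s) z ^ p.1 *: p.2.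
Proof.
move=> linX eig_s; rewrite /qad /=.
set P := fun s' : seq (int * ghat g) => _.
have [eig_s' sum_s'] : P (epsilon (inhabits [::]) P).
  by apply: epsilon_spec; exists s; split=> // p /In_memP /eig_s.
refine (@eigen_sum_scale_eq _ _ _ linX _ _ z _ eig_s (esym sum_s')).
by move=> p /In_memP /eig_s'.
Qed.

Lemma gauge_shift (R : realType) (t : ade_type) (g : vectType (CC R))
    (br : g -> g -> g) (X lh eh e0h : ghat g) (hv : nat) (M : R)
    (q p : R -> CC R) (x : R) :
  linear (hbr t br X) -> hbr t br X lh = 0 -> hbr t br X eh = eh ->
  hbr t br X e0h = - ((hv%:R - 1) *: e0h) ->
  gauge t br X q (fun x => x^-1%:C%C *: lh + eh + p x *: e0h) x
    - (q x *: (e0h + eh) + x^-1%:C%C *: (lh - M%:C%C *: X))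
  = (q x ^ (1 - hv%:Z) * p x - q x) *: e0h + (x^-1%:C%C * M%:C%C - dC q x / q x) *: X.
Proof.
move=> linX X_lh X_eh X_e0h; rewrite /gauge /=.
set s := [:: (0%:Z, x^-1%:C%C *: lh); (1%:Z, eh); (1 - hv%:Z, p x *: e0h)].
have -> : x^-1%:C%C *: lh + eh + p x *: e0h = \sum_(pr <- s) pr.2.
  by rewrite !big_cons big_nil addr0 addrA.
rewrite qad_eigen_sum //; last first.
  move=> pr; rewrite !inE => /or3P [] /eqP -> /=.
  - by apply: (eigenZ linX); rewrite X_lh mulr0z scale0r.
  - by rewrite X_eh mulr1z scale1r.
  - by apply: (eigenZ linX); rewrite X_e0h -scaleNr intrB mulr1z opprB.
rewrite !big_cons big_nil /= expr0z expr1z scale1r addr0 scalerA.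
rewrite scalerDr scalerBr scalerA !scalerBl !opprD opprK !addrA.
(* regroup so that the lh and eh terms cancel *)
by rewrite [LHS](AC 8%AC (((1*7)*(2*6))*(((3*5)*8)*4))%AC) /= !subrr !add0r.
Qed.

Section RealPowers.
Variable R : realType.

Lemma Re_sum n (F : 'I_n -> CC R) : complex.Re (\sum_j F j) = \sum_j complex.Re (F j).
Proof. exact: (raddf_sum (@complex.Re R : Rcomplex R -> R)). Qed.

Lemma Im_sum n (F : 'I_n -> CC R) : complex.Im (\sum_j F j) = \sum_j complex.Im (F j).
Proof. exact: (raddf_sum (@complex.Im R : Rcomplex R -> R)). Qed.

Lemma Re_mul_real (c : CC R) (r : R) : complex.Re (c * r%:C%C) = complex.Re c * r.
Proof. by case: c => a b /=; rewrite mulr0 subr0. Qed.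

Lemma Im_mul_real (c : CC R) (r : R) : complex.Im (c * r%:C%C) = complex.Im c * r.
Proof. by case: c => a b /=; rewrite mulr0 add0r. Qed.

Lemma normc_real (r : R) : 0 <= r -> `|r%:C%C| = r%:C%C.
Proof. by move=> r_ge0; rewrite ger0_norm // ler0c. Qed.

Lemma derive1_sum_powR n (k a : 'I_n -> R) x : 0 < x ->
  derive1 (fun y => \sum_(j < n) k j * y `^ a j) x
    = \sum_(j < n) k j * (a j * x `^ (a j - 1)).
Proof.
move=> x_gt0; rewrite derive1E; apply: derive_val.
have := is_derive_sum (fun j => is_deriveZ (k j) (is_derive1_powR (a j) x_gt0)).
by rewrite fct_sumE.
Qed.

Lemma dC_sum_powR n (c : 'I_n -> CC R) (a : 'I_n -> R) x : 0 < x ->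
  dC (fun y => \sum_(j < n) c j * (y `^ a j)%:C%C) x
    = \sum_(j < n) c j * (a j * x `^ (a j - 1))%:C%C.
Proof.
move=> x_gt0; rewrite /dC.
under eq_fun do rewrite Re_sum (eq_bigr _ (fun j _ => Re_mul_real _ _)).
under [fun y => complex.Im _]eq_fun do
  rewrite Im_sum (eq_bigr _ (fun j _ => Im_mul_real _ _)).
rewrite !derive1_sum_powR //; apply/eqP; rewrite eq_complex /= Re_sum Im_sum.
rewrite !(eq_bigr _ (fun j _ => Re_mul_real _ _)).
by rewrite (eq_bigr _ (fun j _ => Im_mul_real _ _)) !eqxx.
Qed.

Lemma eventually_powR_le (a r : R) : 0 < a -> 0 < r ->
  \forall x \near +oo, x `^ (- a) <= r.
Proof.
move=> a_gt0 r_gt0; set x0 := r `^ (- a^-1).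
have x0_gt0 : 0 < x0 by rewrite powR_gt0.
exists x0; split; first exact: num_real.
move=> x lt_x; have x_gt0 := lt_trans x0_gt0 lt_x.
have -> : r = x0 `^ (- a).
  by rewrite -powRrM mulrNN mulVf ?gt_eqF // powRr1 // ltW.
rewrite !powRN lef_pV2 ?posrE ?powR_gt0 //.
by apply: ge0_ler_powR; rewrite ?nnegrE ltW.
Qed.

Lemma eventually_norm_powR_le (c e : CC R) (a : R) : 0 < a -> 0 < e ->
  \forall x \near +oo, `|c * (x `^ (- a))%:C%C| <= e.
Proof.
move=> a_gt0 e_gt0; set r := e / (`|c| + 1).
have r_gt0 : 0 < r by rewrite divr_gt0 // ltr_pwDr.
have r_real : (complex.Re r)%:C%C = r := RRe_real (gtr0_real r_gt0).
have Re_r_gt0 : 0 < complex.Re r by rewrite -ltcR rmorph0 r_real.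
move: (eventually_powR_le a_gt0 Re_r_gt0); apply: filterS => x le_r.
rewrite normrM normc_real ?powR_ge0 //.
apply: le_trans (_ : `|c| * r <= e).
  by apply: ler_wpM2l => //; rewrite -r_real lecR.
by rewrite mulrA ler_pdivrMr ?ltr_pwDr // mulrDr mulr1 mulrC lerDl ltW.
Qed.

End RealPowers.

Definition dominated_pinfty (R : realType) (a : R -> CC R) (w : R -> R) : Prop :=
  exists C : R, \forall x \near +oo, `|a x| <= (C * w x)%:C%C.

Lemma dominated_pinfty_complex (R : realType) (a : R -> CC R) (w : R -> R) (C : CC R) :
  0 <= C -> (\forall x \near +oo, `|a x| <= C * (w x)%:C%C) -> dominated_pinfty a w.
Proof.
move=> C_ge0 a_le; exists (complex.Re C); move: a_le; apply: filterS => x.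
by rewrite -{1}[C](RRe_real (ger0_real C_ge0)) -rmorphM.
Qed.

Lemma bigO_pinfty_lincomb2 (R : realType) (V : lmodType (CC R)) (F : R -> V)
    (w : R -> R) (a b : R -> CC R) (v1 v2 : V) :
  (forall x, F x = a x *: v1 + b x *: v2) ->
  dominated_pinfty a w -> dominated_pinfty b w -> bigO_pinfty F w.
Proof.
move=> F_ab [Ca a_le] [Cb b_le].
have [x0 [_ ab_le]] := filterI a_le b_le.
exists 2%N, (fun i : 'I_2 => if val i == 0%N then v1 else v2),
  (fun i x => if val i == 0%N then a x else b x), (Ca + Cb), x0.
move=> x /ab_le [ax_le bx_le]; split; first by rewrite F_ab big_ord_recr big_ord1.
have Caw_ge0 : 0 <= Ca * w x by rewrite -ler0c (le_trans _ ax_le).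
have Cbw_ge0 : 0 <= Cb * w x by rewrite -ler0c (le_trans _ bx_le).
case=> -[|[|//]] _ /=; [apply: le_trans ax_le _ | apply: le_trans bx_le _];
  by rewrite lecR mulrDl ?lerDl ?lerDr.
Qed.

Section QAsymptotics.
Variables (R : realType) (hv : nat) (M : R) (E : CC R).
Hypotheses (hv_gt0 : (0 < hv)%N) (M_gt0 : 0 < M).

Local Notation s := (s_const hv M).
Local Notation delta := (delta_const hv M).
Local Notation q := (q_fun hv M E).
Local Notation p := (p_fun hv M E).

Definition qexp (j : nat) : R := M * (1 - hv%:R * j%:R).

Definition qvar (x : R) : CC R := - E * (x `^ (- (M * hv%:R)))%:C%C.

Definition qpoly : {poly CC R} := binom_series (hv%:R^-1) s.

(* x q'(x) = M q(x) - x^M qpoly_euler(qvar x), see x_dC_q. *)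
Definition qpoly_euler : {poly CC R} :=
  \poly_(j < s.+1) (gbinom (hv%:R^-1) j * (M * hv%:R * j%:R)%:C%C).

Definition qpoly_defect : {poly CC R} := 'X + 1 - qpoly ^+ hv.

Lemma q_fun_sum : q = fun y => \sum_(j < s.+1) c_coef hv E j * (y `^ qexp j)%:C%C.
Proof.
apply: funext => y; rewrite /q_fun big_ord_recl /c_coef gbinom0 expr0 mul1r.
by rewrite /qexp mulr0 subr0 mulr1 big_add1 /= big_mkord mul1r.
Qed.

Lemma powR_qexp x j : 0 < x -> x `^ qexp j = x `^ M * (x `^ (- (M * hv%:R))) ^+ j.
Proof.
move=> x_gt0; rewrite -powR_mulrn ?powR_ge0 // -powRrM -powRD; last first.
  by rewrite lt0r_neq0 ?implybT.
by congr (_ `^ _); rewrite /qexp; ring.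
Qed.

Lemma horner_qvar (f : nat -> CC R) x : 0 < x ->
  (x `^ M)%:C%C * (\poly_(j < s.+1) (gbinom (hv%:R^-1) j * f j)).[qvar x]
  = \sum_(j < s.+1) c_coef hv E j * f j * (x `^ qexp j)%:C%C.
Proof.
move=> x_gt0; rewrite horner_poly mulr_sumr; apply: eq_bigr => j _.
by rewrite /c_coef /qvar powR_qexp // exprMn -rmorphXn rmorphM /=; ring.
Qed.

Lemma q_funE x : 0 < x -> q x = (x `^ M)%:C%C * qpoly.[qvar x].
Proof.
move=> x_gt0; have -> : qpoly = \poly_(j < s.+1) (gbinom (hv%:R^-1) j * 1).
  by apply: eq_poly => j _; rewrite mulr1.
by rewrite horner_qvar // q_fun_sum; apply: eq_bigr => j _; rewrite mulr1.
Qed.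

Lemma p_funE x : 0 < x -> p x = (x `^ M)%:C%C ^+ hv * (1 + qvar x).
Proof.
move=> x_gt0; rewrite /p_fun /qvar -rmorphXn -powR_mulrn ?powR_ge0 // -powRrM.
rewrite mulrDr mulr1 mulrCA -rmorphM /= -powRD ?lt0r_neq0 ?implybT //.
by rewrite addrN powRr0 rmorph1 mulr1.
Qed.

Lemma x_dC_q x : 0 < x ->
  x%:C%C * dC q x = M%:C%C * q x - (x `^ M)%:C%C * qpoly_euler.[qvar x].
Proof.
move=> x_gt0; rewrite q_fun_sum dC_sum_powR // horner_qvar // !mulr_sumr -sumrB.
apply: eq_bigr => j _; rewrite powRB ?lt0r_neq0 ?implybT // powRr1 ?ltW // /qexp.
rewrite !(rmorphM, rmorphB, rmorph1, rmorph_nat, fmorphV) /=.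
by field; rewrite fmorph_eq0 gt_eqF.
Qed.

Lemma xpowM_neq0 x : 0 < x -> (x `^ M)%:C%C != 0 :> CC R.
Proof. by move=> x_gt0; rewrite fmorph_eq0 lt0r_neq0 // powR_gt0. Qed.

Lemma qp_defectE x : 0 < x -> qpoly.[qvar x] != 0 ->
  q x ^ (1 - hv%:Z) * p x - q x
  = (x `^ M)%:C%C * qpoly_defect.[qvar x] / qpoly.[qvar x] ^+ hv.-1.
Proof.
move=> x_gt0 T_neq0; rewrite q_funE // p_funE //.
have X_neq0 := xpowM_neq0 x_gt0.
set X := (x `^ M)%:C%C; set T := qpoly.[qvar x].
rewrite expfzDr ?mulf_neq0 // expr1z -exprnN /qpoly_defect !hornerE -/T.
rewrite -(prednK hv_gt0) !exprS /= exprMn.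
by field; rewrite !expf_neq0 ?T_neq0 ?X_neq0.
Qed.

Lemma log_deriv_qE x : 0 < x -> qpoly.[qvar x] != 0 ->
  x^-1%:C%C * M%:C%C - dC q x / q x
  = x^-1%:C%C * qpoly_euler.[qvar x] / qpoly.[qvar x].
Proof.
move=> x_gt0 T_neq0.
have x_neq0 : x%:C%C != 0 :> CC R by rewrite fmorph_eq0 lt0r_neq0.
have -> : dC q x = (x%:C%C)^-1 * (M%:C%C * q x - (x `^ M)%:C%C * qpoly_euler.[qvar x]).
  by rewrite -x_dC_q // mulKf.
rewrite q_funE // fmorphV.
by field; rewrite T_neq0 x_neq0 xpowM_neq0.
Qed.

Let eps : CC R := (2 * (coef_norm1 (qpoly - 1) + 1))^-1.

Let eps_gt0 : 0 < eps.
Proof. by rewrite invr_gt0 mulr_gt0 ?ltr0n ?ltr_pwDr ?coef_norm1_ge0. Qed.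

Let eps_le1 : eps <= 1.
Proof.
rewrite invf_le1 ?mulr_gt0 ?ltr0n ?ltr_pwDr ?coef_norm1_ge0 //.
rewrite -[X in X <= _]mul1r; apply: ler_pM; rewrite ?ler01 ?ler1n //.
exact: ler_wpDl (coef_norm1_ge0 _) (lexx 1).
Qed.

Lemma qpoly_horner_ge_half u : `|u| <= eps -> 2^-1 <= `|qpoly.[u]|.
Proof.
have N_ge0 := coef_norm1_ge0 (qpoly - 1).
move=> small; apply: norm_horner_ge_half; first by rewrite coef_poly gbinom0.
  exact: le_trans small eps_le1.
apply: le_trans (_ : 2 * coef_norm1 (qpoly - 1) * eps <= 1).
  by apply: ler_wpM2l; rewrite ?mulr_ge0.
by rewrite ler_pdivrMr ?mulr_gt0 ?ltr0n ?ltr_pwDr // mul1r ler_wpM2l ?lerDl.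
Qed.

Lemma qpoly_horner_neq0 u : `|u| <= eps -> qpoly.[u] != 0.
Proof.
move/qpoly_horner_ge_half; apply: contraTneq => ->.
by rewrite normr0 lt_geF // invr_gt0 ltr0n.
Qed.

Lemma norm_qpoly_inv_le u : `|u| <= eps -> `|qpoly.[u]|^-1 <= 2.
Proof.
move=> /qpoly_horner_ge_half le_half.
have half_gt0 : 0 < 2^-1 :> CC R by rewrite invr_gt0 ltr0n.
by rewrite -[2]invrK lef_pV2 ?posrE // (lt_le_trans half_gt0).
Qed.

Lemma norm_qvar x : `|qvar x| = `|E| * (x `^ (- (M * hv%:R)))%:C%C.
Proof. by rewrite normrM normrN normc_real ?powR_ge0. Qed.

Lemma eventually_qvar_small : \forall x \near +oo, 1 <= x /\ `|qvar x| <= eps.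
Proof.
near=> x; split; near: x; first exact: nbhs_pinfty_ge.
by apply: eventually_norm_powR_le; rewrite // mulr_gt0 ?ltr0n.
Unshelve. all: by end_near.
Qed.

Lemma delta_le : delta <= M * hv%:R.
Proof.
have hv_pos : (0 : R) < hv%:R by rewrite ltr0n.
have hvM_gt0 : 0 < hv%:R * M by rewrite mulr_gt0.
have s_le : (s%:R : R) * (hv%:R * M) <= M + 1.
  by rewrite -ler_pdivlMr // /s_const truncn_le ?divr_ge0 ?ltW ?addr_gt0.
rewrite /delta_const; nra.
Qed.

Lemma qp_defect_le x : 1 <= x -> `|qvar x| <= eps ->
  `|q x ^ (1 - hv%:Z) * p x - q x|
    <= coef_norm1 qpoly_defect * `|E| ^+ s.+1 * 2 ^+ hv.-1
       * (x `^ (-1 - delta))%:C%C.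
Proof.
move=> x_ge1 small; have x_gt0 : 0 < x := lt_le_trans ltr01 x_ge1.
rewrite qp_defectE ?qpoly_horner_neq0 // normrM normfV normrM normrX.
rewrite normc_real ?powR_ge0 //.
have defect_le :
    `|qpoly_defect.[qvar x]| <= coef_norm1 qpoly_defect * `|qvar x| ^+ s.+1.
  apply: norm_horner_le; last exact: le_trans small eps_le1.
  by move=> i; rewrite ltnS; apply: binom_series_root_coef.
have inv_le : (`|qpoly.[qvar x]| ^+ hv.-1)^-1 <= 2 ^+ hv.-1.
  by rewrite -exprVn lerXn2r ?nnegrE ?invr_ge0 // norm_qpoly_inv_le.
have -> : (x `^ (-1 - delta))%:C%C
          = (x `^ M)%:C%C * (x `^ (- (M * hv%:R)))%:C%C ^+ s.+1.
  rewrite -rmorphXn -rmorphM -powR_qexp // /qexp /delta_const -addn1 natrD.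
  by congr ((_ `^ _)%:C%C); ring.
apply: le_trans (ler_pM _ _ (ler_wpM2l _ defect_le) inv_le) _.
- by rewrite mulr_ge0 // ler0c powR_ge0.
- by rewrite invr_ge0 exprn_ge0.
- by rewrite ler0c powR_ge0.
by rewrite norm_qvar exprMn le_eqVlt; apply/predU1P; left; ring.
Qed.

Lemma log_deriv_q_le x : 1 <= x -> `|qvar x| <= eps ->
  `|x^-1%:C%C * M%:C%C - dC q x / q x|
    <= 2 * coef_norm1 qpoly_euler * `|E| * (x `^ (-1 - delta))%:C%C.
Proof.
move=> x_ge1 small; have x_gt0 : 0 < x := lt_le_trans ltr01 x_ge1.
rewrite log_deriv_qE ?qpoly_horner_neq0 // normrM normfV normrM.
rewrite normc_real ?invr_ge0 ?(ltW x_gt0) //.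
have euler_le :
    `|qpoly_euler.[qvar x]| <= coef_norm1 qpoly_euler * `|qvar x| ^+ 1.
  apply: norm_horner_le; last exact: le_trans small eps_le1.
  by case=> // _; rewrite coef_poly /= mulr0 rmorph0 mulr0.
have pow_le : x^-1 * x `^ (- (M * hv%:R)) <= x `^ (-1 - delta).
  rewrite -powR_inv1 ?(ltW x_gt0) // -powRD ?lt0r_neq0 ?implybT //.
  by apply: ler_powR => //; have := delta_le; lra.
apply: le_trans (ler_pM _ _ (ler_wpM2l _ euler_le) (norm_qpoly_inv_le small)) _.
- by rewrite mulr_ge0 // ler0c invr_ge0 ltW.
- by rewrite invr_ge0.
- by rewrite ler0c invr_ge0 ltW.
rewrite norm_qvar expr1; set N := coef_norm1 qpoly_euler.
have N_ge0 : 0 <= N := coef_norm1_ge0 _.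
apply: le_trans (_ : 2 * N * `|E| * (x^-1 * x `^ (- (M * hv%:R)))%:C%C <= _).
  by rewrite rmorphM le_eqVlt; apply/predU1P; left; ring.
by apply: ler_wpM2l; rewrite ?mulr_ge0 // lecR.
Qed.

Lemma qp_defect_dominated :
  dominated_pinfty (fun x => q x ^ (1 - hv%:Z) * p x - q x)
                   (fun x => x `^ (-1 - delta)).
Proof.
apply: (dominated_pinfty_complex
  (C := coef_norm1 qpoly_defect * `|E| ^+ s.+1 * 2 ^+ hv.-1)).
  by rewrite !mulr_ge0 ?coef_norm1_ge0 ?exprn_ge0.
by apply: filterS eventually_qvar_small => x [x_ge1 small]; apply: qp_defect_le.
Qed.

Lemma log_deriv_q_dominated :
  dominated_pinfty (fun x => x^-1%:C%C * M%:C%C - dC q x / q x)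
                   (fun x => x `^ (-1 - delta)).
Proof.
apply: (dominated_pinfty_complex (C := 2 * coef_norm1 qpoly_euler * `|E|)).
  by rewrite !mulr_ge0 ?coef_norm1_ge0.
by apply: filterS eventually_qvar_small => x [x_ge1 small]; apply: log_deriv_q_le.
Qed.

End QAsymptotics.

Lemma dual_coxeter_gt0 (t : ade_type) : ade_valid t -> (0 < dual_coxeter t)%N.
Proof. by case: t => //= n; lia. Qed.

Theorem lemma3p1 (R : realType) (t : ade_type) (g : vectType (CC R))
    (br : g -> g -> g) (sig : 'I_(ade_rank t) -> 'I_(ade_rank t))
    (eg fg hg : 'I_(ade_rank t) -> g) (a0 : g)
    (l : g) (M : R) (E : CC R) (h : g) :
  is_simple_ADE_chevalley br sig eg fg hg ->
  is_lowest_root_vector br sig hg a0 ->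
  (l \in cartan_sub hg)%VS ->
  0 < M ->
  (h \in cartan_sub hg)%VS ->
  let hv := dual_coxeter t in
  let ehat : ghat g := tens (\sum_i eg i) 0 in
  let e0hat : ghat g := tens a0 1 in
  let hhat : ghat g := tens h 0 in
  let lhat : ghat g := tens l 0 in
  let Lambda := e0hat + ehat in
  let q := q_fun hv M E in
  let delta := delta_const hv M in
  (* coefficient of L(x,E) = d/dx + l/x + e + p(x,E) e_0 *)
  let A := fun x : R => x^-1%:C%C *: lhat + ehat + p_fun hv M E x *: e0hat in
  hbr t br hhat ehat = ehat ->
  hbr t br hhat e0hat = - ((hv%:R - 1) *: e0hat) ->
  bigO_pinfty
    (fun x : R => gauge t br hhat q A x
                  - (q x *: Lambda + x^-1%:C%C *: (lhat - M%:C%C *: hhat)))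
    (fun x : R => x `^ (- 1 - delta)).
Proof.
(* The root-space property of a0 is only used through the eigenvalue
   hypothesis on e0hat. *)
move=> chev _ lC M_gt0 hC hv ehat e0hat hhat lhat Lambda q delta A adh_e adh_e0.
have [[valid _] [br_linl br_linr _ _] _ [cartan_comm _ _ _ _] _] := chev.
have hv_gt0 : (0 < hv)%N := dual_coxeter_gt0 valid.
have adh_l : hbr t br hhat lhat = 0.
  rewrite hbr_tens0_tens // (bracket_span_eq0 br_linl br_linr _ hC lC) ?tens0 //.
  by move=> _ _ /mapP [i _ ->] /mapP [j _ ->].
apply: (bigO_pinfty_lincomb2 _ (qp_defect_dominated E hv_gt0 M_gt0)
                               (log_deriv_q_dominated E hv_gt0 M_gt0)).
by move=> x; apply: gauge_shift => //; apply: linear_hbr_tens0.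
Qed.
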